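(* Let $G$ be a vigorous approximately full subgroup of $\operatorname{Homeo}(\mathfrak{C})$. Then $G$ is strongly approximately full. Consequently, for vigorous subgroups of $\operatorname{Homeo}(\mathfrak{C})$, being approximately full and being strongly approximately full are equivalent.
   Context: $\mathfrak{C}$ denotes a Cantor space (a space homeomorphic to $\{0,1\}^\omega$). Groups of homeomorphisms act on the right. $K_{\mathfrak{C}}$ denotes the set of non-empty proper clopen subsets of $\mathfrak{C}$. For $\gamma\in\operatorname{Homeo}(\mathfrak{C})$, $\operatorname{supp}(\gamma)=\{p\in\mathfrak{C}: p\gamma\neq p\}$. A subset $S\subseteq \operatorname{Homeo}(\mathfrak{C})$ is vigorous if for all clopen $A,B,C\subseteq\mathfrak{C}$ with $B,C$ non-empty proper subsets of $A$ there is $\gamma\in S$ with $\operatorname{supp}(\gamma)\subseteq A$ and $B\gamma\subseteq C$. $G$ is approximately full if whenever $\Gamma\subseteq G$ is finite, $\{D_\gamma\}_{\gamma\in\Gamma}$ is a partition of $\mathfrak{C}$ into clopen sets such that $\{D_\gamma\gamma\}_{\gamma\in\Gamma}$ is also a partition of $\mathfrak{C}$, and $\delta\in\Gamma$, there exists $\chi\in G$ with $\chi|_{D_\gamma}=\gamma|_{D_\gamma}$ for every $\gamma\in\Gamma\setminus\{\delta\}$. $G$ is strongly approximately full if for all $D,R\in K_{\mathfrak{C}}$, every finite $\Gamma\subseteq G$ and every partition $\{D_\gamma\}_{\gamma\in\Gamma}$ of $D$ into clopen sets such that $\{D_\gamma\gamma\}_{\gamma\in\Gamma}$ is a partition of $R$,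 there exists $\chi\in G$ with $\chi|_{D_\gamma}=\gamma|_{D_\gamma}$ for every $\gamma\in\Gamma$. *)

From HB Require Import structures.
From mathcomp Require Import all_boot all_order all_algebra.
From mathcomp Require Import all_classical all_reals all_analysis.
Set Implicit Arguments. Unset Strict Implicit. Unset Printing Implicit Defensive.
Local Open Scope classical_set_scope.

Notation CS := cantor_space.

(* Homeomorphisms of the Cantor space (p gamma is written [gamma p];
   the right action convention only affects the order of composition). *)
Definition homeo (f : CS -> CS) : Prop :=
  exists g : CS -> CS, [/\ cancel f g, cancel g f, continuous f & continuous g].

Definition homeo_subgroup (G : set (CS -> CS)) : Prop :=
  [/\ (forall f, G f -> homeo f),
      G id,
      (forall f g, G f -> G g -> G (g \o f)) &
      (forall f, G f -> exists2 h, G h & cancel f h /\ cancel h f)].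

Definition supp (f : CS -> CS) : set CS := [set p | f p <> p].

Definition KC (A : set CS) : Prop := [/\ clopen A, A !=set0 & A <> setT].

Definition vigorous (S : set (CS -> CS)) : Prop :=
  forall A B C : set CS, clopen A -> clopen B -> clopen C ->
    B `<=` A -> B !=set0 -> B <> A ->
    C `<=` A -> C !=set0 -> C <> A ->
    exists2 g, S g & supp g `<=` A /\ g @` B `<=` C.

Definition clopen_partition (Gam : set (CS -> CS)) (P : (CS -> CS) -> set CS)
    (X : set CS) : Prop :=
  [/\ (forall g, Gam g -> clopen (P g)),
      (forall g, Gam g -> P g !=set0),
      (forall g h, Gam g -> Gam h -> g <> h -> P g `&` P h = set0) &
      \bigcup_(g in Gam) P g = X].

Definition approximately_full (G : set (CS -> CS)) : Prop :=
  forall (Gam : set (CS -> CS)) (D : (CS -> CS) -> set CS) (d : CS -> CS),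
    finite_set Gam -> Gam `<=` G ->
    clopen_partition Gam D setT ->
    clopen_partition Gam (fun g => g @` D g) setT ->
    Gam d ->
    exists2 chi, G chi &
      forall g, Gam g -> g <> d -> forall x, D g x -> chi x = g x.

Definition strongly_approximately_full (G : set (CS -> CS)) : Prop :=
  forall (Dom R : set CS) (Gam : set (CS -> CS)) (D : (CS -> CS) -> set CS),
    KC Dom -> KC R ->
    finite_set Gam -> Gam `<=` G ->
    clopen_partition Gam D Dom ->
    clopen_partition Gam (fun g => g @` D g) R ->
    exists2 chi, G chi &
      forall g, Gam g -> forall x, D g x -> chi x = g x.

From mathcomp Require Import all_boot all_order all_algebra.
From mathcomp Require Import all_classical all_reals all_analysis.
Set Implicit Arguments. Unset Strict Implicit. Unset Printing Implicit Defensive.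
Local Open Scope classical_set_scope.

(* Strong implies plain approximate fullness for any group: delete the
   exceptional part [D d] and realise the remaining pieces as a map between
   the complements of [D d] and of its image.

   For the converse, let [D g] (g in Gam) partition [Dom] with images
   partitioning [R].  Using that C is perfect and zero-dimensional, and then
   vigour, we find [c1], [c2] in [G] moving [Dom] and [R] onto disjoint sets
   whose union misses a point.  The space then decomposes into the copies
   [c1 @` D g], the copies [c2 @` (g @` D g)] and the rest; the maps
   [c2 g c1^-1], their inverses and the identity permute these pieces.
   Approximate fullness (for indexed families, after merging repeated maps)
   gives [sigma] in [G] agreeing with [c2 g c1^-1] on each [c1 @` D g], and
   [c2^-1 sigma c1] is the required element. *)

(* Homeomorphisms map clopen sets to clopen sets: the image is the preimage
   under the continuous inverse. *)
Lemma homeo_image_clopen (f : CS -> CS) (A : set CS) :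
  homeo f -> clopen A -> clopen (f @` A).
Proof.
case=> g [fK gK _ g_cont] cA.
suff -> : f @` A = g @^-1` A by exact: preimage_clopen.
apply/seteqP; split=> x; first by case=> y Ay <-; rewrite /= fK.
by move=> Agx; exists (g x); rewrite ?gK.
Qed.

(* A chosen two-sided inverse of a bijection (the identity otherwise). *)
Definition finv (f : CS -> CS) : CS -> CS :=
  match pselect (exists h, cancel f h /\ cancel h f) with
  | left e => proj1_sig (cid e)
  | right _ => id
  end.

Lemma homeo_finvK (f : CS -> CS) :
  homeo f -> cancel f (finv f) /\ cancel (finv f) f.
Proof.
case=> g [fK gK _ _]; rewrite /finv.
case: pselect => [e|[]]; last by exists g.
by case: (cid e).
Qed.

Lemma finv_in_group (G : set (CS -> CS)) (f : CS -> CS) :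
  homeo_subgroup G -> G f -> G (finv f).
Proof.
case=> G_homeo _ _ G_inv Gf.
have [h Gh [fhK hfK]] := G_inv f Gf.
have [ffK _] := homeo_finvK (G_homeo f Gf).
suff -> : finv f = h by [].
by apply: funext => y; rewrite -[in LHS](hfK y) ffK.
Qed.

Lemma partition_trivIset (Gam : set (CS -> CS)) (P : (CS -> CS) -> set CS)
    (X : set CS) :
  clopen_partition Gam P X -> trivIset Gam P.
Proof.
case=> _ _ disj _ g h Gg Gh Pgh; apply: contrapT => gh.
by rewrite (disj g h Gg Gh gh) in Pgh; case: Pgh.
Qed.

(* An indexed decomposition of the Cantor space into pairwise disjoint clopen
   sets; unlike [clopen_partition], parts may be empty and may repeat. *)
Definition clopen_decomposition (I : Type) (S : set I) (P : I -> set CS) :=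
  [/\ forall i, S i -> clopen (P i), trivIset S P &
      \bigcup_(i in S) P i = setT].

(* Any union of parts of a clopen decomposition is clopen, since its
   complement is the union of the remaining parts. *)
Lemma decomposition_bigcup_clopen (I : Type) (S Q : set I) (P : I -> set CS) :
  clopen_decomposition S P -> Q `<=` S -> clopen (\bigcup_(i in Q) P i).
Proof.
move=> [cP trivP covP] QS; split; first by apply: bigcup_open => i /QS /cP [].
suff -> : \bigcup_(i in Q) P i = ~` \bigcup_(i in S `\` Q) P i.
  by rewrite closedC; apply: bigcup_open => i [/cP []].
apply/seteqP; split=> x.
- case=> i Qi Pix [j [Sj nQj] Pjx]; apply: nQj.
  by rewrite -(trivP i j (QS _ Qi) Sj) //; exists x.
- move=> nx; have : (\bigcup_(i in S) P i) x by rewrite covP.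
  case=> i Si Pix; exists i => //.
  by apply: contrapT => nQi; apply: nx; exists i.
Qed.

Lemma decomposition_permute (I : Type) (S : set I) (P Q : I -> set CS)
    (s : I -> I) :
  clopen_decomposition S P -> (forall i, S i -> S (s i)) -> involutive s ->
  (forall i, S i -> Q i = P (s i)) -> clopen_decomposition S Q.
Proof.
move=> [cP trivP covP] Ss sK QP; split.
- by move=> i Si; rewrite QP //; exact/cP/Ss.
- move=> i j Si Sj; rewrite !QP // => Pij.
  by apply: (inv_inj sK); apply: trivP => //; exact: Ss.
- apply/seteqP; split=> // x _.
  have : (\bigcup_(i in S) P i) x by rewrite covP.
  by case=> i Si Pix; exists (s i); rewrite ?QP ?sK //; exact: Ss.
Qed.

Lemma merge_decomposition (I : Type) (S : set I) (f : I -> CS -> CS)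
    (Q : I -> set CS) :
  clopen_decomposition S Q ->
  clopen_partition (f @` [set i | S i /\ Q i !=set0])
    (fun g => \bigcup_(i in [set i | S i /\ f i = g]) Q i) setT.
Proof.
move=> decQ; have [_ trivQ covQ] := decQ; split.
- by move=> g _; apply: (decomposition_bigcup_clopen decQ) => i [].
- by move=> g [i [Si [x Qx]] <-]; exists x; exists i.
- move=> g h _ _ gh; apply/seteqP; split=> // x.
  move=> [[i [Si fig] Qix] [j [Sj fjh] Qjx]]; apply: gh.
  by rewrite -fig -fjh (trivQ i j) //; exists x.
- apply/seteqP; split=> // x _.
  have : (\bigcup_(i in S) Q i) x by rewrite covQ.
  case=> i Si Qix; exists (f i); last by exists i.
  by exists i => //; split => //; exists x.
Qed.

Lemma approximately_full_indexed (G : set (CS -> CS)) (I : Type) (S : set I)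
    (f : I -> CS -> CS) (P : I -> set CS) (i0 : I) :
  approximately_full G -> finite_set S -> (forall i, S i -> G (f i)) ->
  clopen_decomposition S P -> clopen_decomposition S (fun i => f i @` P i) ->
  S i0 -> P i0 !=set0 ->
  exists2 chi, G chi &
    forall i, S i -> f i <> f i0 -> forall x, P i x -> chi x = f i x.
Proof.
move=> afG finS GS decP decI Si0 Pi0.
pose Gam := f @` [set i | S i /\ P i !=set0].
pose D g := \bigcup_(i in [set i | S i /\ f i = g]) P i.
have image_nonempty : [set i | S i /\ P i !=set0] =
    [set i | S i /\ (f i @` P i) !=set0].
  apply/seteqP; split=> i [Si [x Pix]]; split => //.
    by exists (f i x); exists x.
  by case: Pix => y Piy _; exists y.
have image_D g : g @` D g = \bigcup_(i in [set i | S i /\ f i = g]) f i @` P i.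
  apply/seteqP; split=> y.
  - by case=> x [i [Si <-] Pix] <-; exists i => //; exists x.
  - by case=> i [Si fig] [x Pix <-]; exists x; [exists i | rewrite fig].
have partD : clopen_partition Gam D setT by exact: merge_decomposition.
have partI : clopen_partition Gam (fun g => g @` D g) setT.
  under eq_fun do rewrite image_D.
  by rewrite /Gam image_nonempty; exact: merge_decomposition.
have finGam : finite_set Gam.
  by apply: finite_image; apply: sub_finite_set finS => i [].
have GamG : Gam `<=` G by move=> _ [i [Si _] <-]; exact: GS.
have [chi Gchi chiE] := afG Gam D (f i0) finGam GamG partD partI
  (ex_intro2 _ _ i0 (conj Si0 Pi0) erefl).
exists chi => // i Si fi x Pix.
by apply: chiE => //; [exists i => //; split => //; exists x | exists i].
Qed.

Lemma partition_remove (Gam : set (CS -> CS)) (Q : (CS -> CS) -> set CS)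
    (d : CS -> CS) :
  clopen_partition Gam Q setT -> Gam d ->
  clopen_partition (Gam `\ d) Q (~` Q d).
Proof.
move=> partQ Gd; have [cQ neQ disjQ covQ] := partQ; split.
- by move=> g [Gg _]; exact: cQ.
- by move=> g [Gg _]; exact: neQ.
- by move=> g h [Gg _] [Gh _]; exact: disjQ.
apply/seteqP; split=> x.
- case=> g [Gg gd] Qgx Qdx; apply: gd.
  by apply: (partition_trivIset partQ) => //; exists x.
- move=> nQdx; have : (\bigcup_(g in Gam) Q g) x by rewrite covQ.
  case=> g Gg Qgx; exists g => //; split => // /= gd.
  by apply: nQdx; rewrite -gd.
Qed.

Lemma partition_compl_KC (Gam : set (CS -> CS)) (Q : (CS -> CS) -> set CS)
    (d g : CS -> CS) :
  clopen_partition Gam Q setT -> Gam d -> Gam g -> g <> d -> KC (~` Q d).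
Proof.
move=> partQ Gd Gg gd; have [cQ neQ _ _] := partQ; split.
- exact/(clopenC set0)/cQ.
- have [x Qgx] := neQ g Gg; exists x => Qdx; apply: gd.
  by apply: (partition_trivIset partQ) => //; exists x.
- move=> QdT; have [y Qdy] := neQ d Gd.
  by have : (~` Q d) y by rewrite QdT.
Qed.

Lemma strongly_approximately_full_approximately_full (G : set (CS -> CS)) :
  strongly_approximately_full G -> approximately_full G.
Proof.
move=> safG Gam D d finGam GamG partD partI Gd.
have [[g Gg gd]|only_d] := pselect (exists2 g, Gam g & g <> d); last first.
  by exists d; [exact: GamG | move=> g Gg gd; case: only_d; exists g].
have [chi Gchi chiE] := safG _ _ (Gam `\ d) D
  (partition_compl_KC partD Gd Gg gd) (partition_compl_KC partI Gd Gg gd)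
  (sub_finite_set (@subDsetl _ Gam [set d]) finGam)
  (fun g Gg => GamG g (proj1 Gg))
  (partition_remove partD Gd) (partition_remove partI Gd).
by exists chi => // h Gh hd; apply: chiE.
Qed.

Lemma cantor_separate (a b : CS) :
  a <> b -> exists2 U : set CS, clopen U & U a /\ ~ U b.
Proof.
move=> /eqP ab; have [U [cU Ua nUb]] := cantor_zero_dimensional ab.
by exists U.
Qed.

Lemma cantor_other_point (U : set CS) (a : CS) :
  open U -> U a -> exists2 r, U r & r <> a.
Proof.
move=> oU Ua.
have [x [y [Ux Uy /eqP xy]]] := perfectTP_ex.1 cantor_perfect U oU (ex_intro _ a Ua).
have [xa|xa] := pselect (x = a); last by exists x.
by exists y => // ya; apply: xy; rewrite xa ya.
Qed.

Lemma cantor_disjoint_clopens (E F : set CS) :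
  open E -> open F -> E !=set0 -> F !=set0 ->
  exists U1 U2 r, [/\ clopen U1, clopen U2, (E `&` U1) !=set0,
    (F `&` U2) !=set0 & [/\ U1 `&` U2 = set0, ~ U1 r & ~ U2 r]].
Proof.
move=> oE oF [a Ea] [b' Fb'].
have [b Fb ab] : exists2 b, F b & a <> b.
  have [ab'|ab'] := pselect (a = b'); last by exists b'.
  have [b Fb bb'] := cantor_other_point oF Fb'.
  by exists b => // ab; apply: bb'; rewrite -ab.
have [V1 cV1 [V1a nV1b]] := cantor_separate ab.
have [r V1r ra] := cantor_other_point (proj1 cV1) V1a.
have rb : r <> b by move=> rb; apply: nV1b; rewrite -rb.
have [V2 cV2 [V2a nV2r]] := cantor_separate (nesym ra).
have [V3 cV3 [V3b nV3r]] := cantor_separate (nesym rb).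
exists (V1 `&` V2), (~` V1 `&` V3), r; split.
- exact: clopenI.
- exact/clopenI/cV3/(clopenC set0).
- by exists a.
- by exists b.
split.
- by apply/seteqP; split=> // x [[V1x _] []].
- by case=> _ /nV2r.
- by case=> _ /nV3r.
Qed.

Lemma vigorous_displace (G : set (CS -> CS)) (B C : set CS) :
  vigorous G -> KC B -> clopen C -> C !=set0 -> C <> setT ->
  exists2 g, G g & g @` B `<=` C.
Proof.
move=> vigG [cB neB BT] cC neC CT.
have [g Gg [_ gBC]] := vigG setT B C clopenT cB cC
  (@subsetT _ _) neB BT (@subsetT _ _) neC CT.
by exists g.
Qed.

(* Indices of the auxiliary decomposition used to reduce strong approximate
   fullness to approximate fullness: [Fwd g] and [Bwd g] for the pieces moved
   by [g] and back, [Rest] for the part of the space left fixed. *)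
Inductive swap_index : Type :=
  | Rest
  | Fwd of (CS -> CS)
  | Bwd of (CS -> CS).

Definition swap (i : swap_index) : swap_index :=
  match i with Rest => Rest | Fwd g => Bwd g | Bwd g => Fwd g end.

Lemma swapK : involutive swap. Proof. by case. Qed.

Section SwapDecomposition.
Variables (Gam : set (CS -> CS)) (D : (CS -> CS) -> set CS).
Variables (Dom R : set CS) (c1 c2 : CS -> CS).
Hypothesis partD : clopen_partition Gam D Dom.
Hypothesis partI : clopen_partition Gam (fun g => g @` D g) R.
Hypotheses (clopenDom : clopen Dom) (clopenR : clopen R).
Hypotheses (c1_homeo : homeo c1) (c2_homeo : homeo c2).
Hypothesis Gam_homeo : forall g, Gam g -> homeo g.
Hypothesis disjoint_moved : c1 @` Dom `&` c2 @` R = set0.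

Definition swap_dom (i : swap_index) : Prop :=
  match i with Rest => True | Fwd g | Bwd g => Gam g end.

Definition swap_piece (i : swap_index) : set CS :=
  match i with
  | Rest => ~` (c1 @` Dom `|` c2 @` R)
  | Fwd g => c1 @` D g
  | Bwd g => c2 @` (g @` D g)
  end.

Definition swap_map (i : swap_index) : CS -> CS :=
  match i with
  | Rest => id
  | Fwd g => c2 \o g \o finv c1
  | Bwd g => c1 \o finv g \o finv c2
  end.

Lemma D_sub_Dom (g : CS -> CS) : Gam g -> D g `<=` Dom.
Proof. by case: partD => _ _ _ <- Gg x Dx; exists g. Qed.

Lemma image_sub_R (g : CS -> CS) : Gam g -> g @` D g `<=` R.
Proof. by case: partI => _ _ _ <- Gg x Dx; exists g. Qed.

Lemma swap_dom_finite : finite_set Gam -> finite_set swap_dom.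
Proof.
move=> finGam.
suff -> : swap_dom = [set Rest] `|` (Fwd @` Gam `|` Bwd @` Gam).
  by rewrite !finite_setU; split; [exact: finite_set1 | split; exact: finite_image].
apply/seteqP; split=> [[|g|g] /= Gg|_ [->|[[g Gg <-]|[g Gg <-]]]] //.
- by left.
- by right; left; exists g.
- by right; right; exists g.
Qed.

Lemma swap_piece_clopen (i : swap_index) :
  swap_dom i -> clopen (swap_piece i).
Proof.
have [clopenD _ _ _] := partD; have [clopenI _ _ _] := partI.
case: i => [|g|g] /= Gg.
- by apply/(clopenC set0)/clopenU; exact: homeo_image_clopen.
- exact/homeo_image_clopen/clopenD.
- exact/homeo_image_clopen/clopenI.
Qed.

Lemma swap_map_image (i : swap_index) :
  swap_dom i -> swap_map i @` swap_piece i = swap_piece (swap i).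
Proof.
have [c1K _] := homeo_finvK c1_homeo; have [c2K _] := homeo_finvK c2_homeo.
case: i => [|g|g] /= Gg; first exact: image_id.
- by rewrite image_comp [RHS]image_comp; apply: eq_imagel => x _ /=; rewrite c1K.
- have [gK _] := homeo_finvK (Gam_homeo Gg).
  by rewrite !image_comp; apply: eq_imagel => x _ /=; rewrite c2K gK.
Qed.

Lemma not_moved_both (x : CS) : (c1 @` Dom) x -> (c2 @` R) x -> False.
Proof. by move=> M1x M2x; rewrite -[False]/(set0 x) -disjoint_moved. Qed.

(* Pieces with distinct indices are disjoint: [Fwd] pieces lie in
   [c1 @` Dom], [Bwd] pieces in [c2 @` R], and within each family
   disjointness comes from the partitions and the injectivity of [c1], [c2]. *)
Lemma swap_piece_trivIset : trivIset swap_dom swap_piece.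
Proof.
have [c1K _] := homeo_finvK c1_homeo; have [c2K _] := homeo_finvK c2_homeo.
have inM1 g : Gam g -> swap_piece (Fwd g) `<=` c1 @` Dom.
  by move=> Gg; apply/image_subset/D_sub_Dom.
have inM2 g : Gam g -> swap_piece (Bwd g) `<=` c2 @` R.
  by move=> Gg; apply/image_subset/image_sub_R.
move=> [|g|g] [|h|h] Si Sj [x []] //.
- by move=> out /(inM1 _ Sj) ?; case: out; left.
- by move=> out /(inM2 _ Sj) ?; case: out; right.
- by move=> /(inM1 _ Si) ? out; case: out; left.
- case=> y Dgy <- [z Dhz /(can_inj c1K) zy]; subst z.
  by congr Fwd; apply: (partition_trivIset partD) => //; exists y.
- by move=> /(inM1 _ Si) M1x /(inM2 _ Sj) M2x; case: (not_moved_both M1x M2x).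
- by move=> /(inM2 _ Si) ? out; case: out; right.
- by move=> /(inM2 _ Si) M2x /(inM1 _ Sj) M1x; case: (not_moved_both M1x M2x).
- case=> y Igy <- [z Ihz /(can_inj c2K) zy]; subst z.
  by congr Bwd; apply: (partition_trivIset partI) => //; exists y.
Qed.

Lemma swap_piece_cover : \bigcup_(i in swap_dom) swap_piece i = setT.
Proof.
have [_ _ _ covD] := partD; have [_ _ _ covI] := partI.
apply/seteqP; split=> // x _.
have [[y + <-]|notM1] := pselect ((c1 @` Dom) x).
  by rewrite -covD => -[g Gg Dgy]; exists (Fwd g) => //; exists y.
have [[y + <-]|notM2] := pselect ((c2 @` R) x).
  by rewrite -covI => -[g Gg Igy]; exists (Bwd g) => //; exists y.
by exists Rest => //= -[].
Qed.

Lemma swap_decomposition : clopen_decomposition swap_dom swap_piece.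
Proof.
by split; [exact: swap_piece_clopen | exact: swap_piece_trivIset |
  exact: swap_piece_cover].
Qed.

Lemma swap_image_decomposition :
  clopen_decomposition swap_dom (fun i => swap_map i @` swap_piece i).
Proof.
apply: (decomposition_permute swap_decomposition _ swapK swap_map_image).
by case.
Qed.

Lemma fwd_map_neq_id (g : CS -> CS) (x : CS) :
  Gam g -> D g x -> swap_map (Fwd g) <> swap_map Rest.
Proof.
move=> Gg Dgx fwd_id; have [c1K _] := homeo_finvK c1_homeo.
have /= := congr1 (fun h => h (c1 x)) fwd_id; rewrite c1K => c1x_eq.
apply: (not_moved_both (x := c1 x)); first by exists x => //; exact: D_sub_Dom Dgx.
by rewrite -c1x_eq; apply/imageP/(image_sub_R Gg)/imageP.
Qed.

Lemma swap_map_in_group (G : set (CS -> CS)) (i : swap_index) :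
  homeo_subgroup G -> G c1 -> G c2 -> Gam `<=` G -> swap_dom i ->
  G (swap_map i).
Proof.
move=> hG Gc1 Gc2 GamG; have [_ Gid Gcomp _] := hG.
have Ginv := finv_in_group hG.
case: i => [|g|g] /= Gg //.
- exact: (Gcomp _ _ (Ginv _ Gc1) (Gcomp _ _ (GamG _ Gg) Gc2)).
- exact: (Gcomp _ _ (Ginv _ Gc2) (Gcomp _ _ (Ginv _ (GamG _ Gg)) Gc1)).
Qed.

End SwapDecomposition.

Lemma vigorous_move_apart (G : set (CS -> CS)) (Dom R : set CS) :
  vigorous G -> KC Dom -> KC R ->
  exists c1 c2 r, [/\ G c1, G c2, c1 @` Dom `&` c2 @` R = set0,
    ~ (c1 @` Dom) r & ~ (c2 @` R) r].
Proof.
move=> vigG KDom KR.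
have [clopenDom _ DomT] := KDom; have [clopenR _ RT] := KR.
have complN0 (A : set CS) : A <> setT -> (~` A) !=set0.
  move=> AT; apply: contrapT => noA; apply: AT; apply/seteqP; split=> // x _.
  by apply: contrapT => nAx; apply: noA; exists x.
have [U1 [U2 [r [cU1 cU2 neU1 neU2 [U12 nU1r nU2r]]]]] :=
  cantor_disjoint_clopens (closed_openC clopenDom.2) (closed_openC clopenR.2)
    (complN0 _ DomT) (complN0 _ RT).
have missing_r (A U : set CS) : ~ U r -> A `&` U <> setT.
  move=> nUr AUT; suff : (A `&` U) r by case.
  by rewrite AUT.
have [c1 Gc1 c1Dom] := vigorous_displace vigG KDom
  (clopenI (clopenC set0 clopenDom) cU1) neU1 (missing_r _ _ nU1r).
have [c2 Gc2 c2R] := vigorous_displace vigG KR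
  (clopenI (clopenC set0 clopenR) cU2) neU2 (missing_r _ _ nU2r).
exists c1, c2, r; split => //.
- apply/seteqP; split=> // x [/c1Dom [_ U1x] /c2R [_ U2x]].
  by rewrite -U12.
- by move=> /c1Dom [_ /nU1r].
- by move=> /c2R [_ /nU2r].
Qed.

(* Approximate fullness implies strong approximate fullness for vigorous
   groups: move [Dom] and [R] by [c1], [c2] in [G] to disjoint sets missing a
   point [r], realise the swap decomposition (the rest containing [r] is the
   exceptional part) by some [sigma] in [G], and take [c2^-1 sigma c1]. *)
Lemma approximately_full_strongly (G : set (CS -> CS)) :
  homeo_subgroup G -> vigorous G -> approximately_full G ->
  strongly_approximately_full G.
Proof.
move=> hG vigG afG Dom R Gam D KDom KR finGam GamG partD partI.
have [G_homeo _ Gcomp _] := hG.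
have [[clopenDom _ _] [clopenR _ _]] := (KDom, KR).
have [c1 [c2 [r [Gc1 Gc2 disjoint_moved nM1r nM2r]]]] :=
  vigorous_move_apart vigG KDom KR.
have Gam_homeo g : Gam g -> homeo g by move=> Gg; exact/G_homeo/GamG.
have [c1_homeo c2_homeo] := (G_homeo _ Gc1, G_homeo _ Gc2).
have rest_r : swap_piece D Dom R c1 c2 Rest r by case.
have [sigma Gsigma sigmaE] := approximately_full_indexed afG
  (swap_dom_finite finGam) (fun i => swap_map_in_group hG Gc1 Gc2 GamG)
  (swap_decomposition partD partI clopenDom clopenR c1_homeo c2_homeo
     disjoint_moved)
  (swap_image_decomposition partD partI clopenDom clopenR c1_homeo c2_homeo
     Gam_homeo disjoint_moved)
  (I : swap_dom Gam Rest) (ex_intro _ r rest_r).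
exists (finv c2 \o sigma \o c1).
  exact: (Gcomp _ _ Gc1 (Gcomp _ _ Gsigma (finv_in_group hG Gc2))).
move=> g Gg x Dgx; have [c1K _] := homeo_finvK c1_homeo.
have [c2K _] := homeo_finvK c2_homeo.
rewrite /= (sigmaE (Fwd g)) /= ?c1K ?c2K //; last by exists x.
exact: fwd_map_neq_id partD partI c1_homeo disjoint_moved _ _ Gg Dgx.
Qed.

Theorem corollary2p13 (G : set (CS -> CS)) :
  homeo_subgroup G -> vigorous G ->
  (approximately_full G -> strongly_approximately_full G) /\
  (approximately_full G <-> strongly_approximately_full G).
Proof.
move=> hG vigG; have af_saf := approximately_full_strongly hG vigG.
split=> //; split=> //.
exact: strongly_approximately_full_approximately_full.
Qed.
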